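(* Let $A$ be a generator of a maximal split torus $T\subset\mathrm{SL}(V)$, with eigenvalues $\xi,\xi^{-1}\in\mathbb{F}$, and let $\{\mathbf{e}_1,\mathbf{e}_2\}$ be a symplectic basis of $(V,S)$ with $A\mathbf{e}_1=\xi\mathbf{e}_1$ and $A\mathbf{e}_2=\xi^{-1}\mathbf{e}_2$. Define: - $B_+(\mathbf{u},\mathbf{v})=S(\mathbf{u},\mathbf{e}_1)S(\mathbf{v},\mathbf{e}_2)$; - $g_0(\mathbf{u},\mathbf{v})=2\,\mathrm{Tr}\,B_+(\mathbf{u},\mathbf{v})\in\mathbb{Z}_4$; - $g(\mathbf{u},\mathbf{v})=h\big(B_+(\mathbf{u}+\mathbf{v},\mathbf{u}+\mathbf{v})^{1/2}\big)-h\big(B_+(\mathbf{u},\mathbf{u})^{1/2}\big)-h\big(B_+(\mathbf{v},\mathbf{v})^{1/2}\big)+g_0(\mathbf{u},\mathbf{v})\in\mathbb{Z}_4$. Then $m=i^{g}$ is a $T$-invariant Weyl multiplier for $(V,S)$, and $m(\alpha_1\mathbf{e}_1,\alpha_2\mathbf{e}_2)=i^{h((\alpha_1\alpha_2)^{1/2})}$ for all $\alpha_1,\alpha_2\in\mathbb{F}$.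
   Context: $\mathbb{F}$ is a finite field with $|\mathbb{F}|=2^n$, $\mathrm{Tr}:\mathbb{F}\to\mathbb{Z}_2$ is the field trace, and $\alpha^{1/2}:=\alpha^{|\mathbb{F}|/2}$ is the inverse of squaring. $V$ is a $2$-dimensional $\mathbb{F}$-space, and $S$ is a symplectic form (nonzero bilinear with $S(\mathbf{v},\mathbf{v})=0$). A symplectic basis is a basis with $S(\mathbf{e}_1,\mathbf{e}_2)=1$. A Weyl multiplier for $(V,S)$ is a unit-modulus function $m$ on $V\times V$ with the following properties: - the cocycle identity $m(\mathbf{u}+\mathbf{v},\mathbf{w})m(\mathbf{u},\mathbf{v})=m(\mathbf{u},\mathbf{v}+\mathbf{w})m(\mathbf{v},\mathbf{w})$ holds; - $m(\mathbf{d}_1,\mathbf{d}_2)=1$ for $\mathbf{d}_1,\mathbf{d}_2$ in a common $1$-dimensional subspace; - $\overline{m(\mathbf{u},\mathbf{v})}m(\mathbf{v},\mathbf{u})=(-1)^{\mathrm{Tr}\,S(\mathbf{u},\mathbf{v})}$. $m$ is $T$-invariant if $m(B\mathbf{u},B\mathbf{v})=m(\mathbf{u},\mathbf{v})$ for all $B\in T$. A maximal split torus is a cyclic subgroup of $\mathrm{SL}(V)$ of order $|\mathbb{F}|-1$ generated by an element with two distinct eigenvalues in $\mathbb{F}$. Fix a basis $\omega_1,\dots,\omega_n$ of $\mathbb{F}$ over $\mathbb{Z}_2$ with $\mathrm{Tr}(\omega_i\omega_j)=\delta_{ij}$; such a basis exists. Fix signs $r_1,\dots,r_n\in\{\pm1\}$,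 and define $h:\mathbb{F}\to\mathbb{Z}_4$ by $h(\sum_i z_i\omega_i)=\sum_i r_i z_i^2$ for $z_i\in\mathbb{Z}_2$, where $z\mapsto z^2$ maps $\mathbb{Z}_2\to\mathbb{Z}_4$ ($0\mapsto0$, $1\mapsto1$). The map $2\cdot:\mathbb{Z}_2\to\mathbb{Z}_4$ sends $z\mapsto 2z$, and $i$ is the imaginary unit. *)

From HB Require Import structures.
From mathcomp Require Import all_boot all_order all_algebra all_fingroup all_field.
Set Implicit Arguments. Unset Strict Implicit. Unset Printing Implicit Defensive.
Import GRing.Theory Num.Theory.
Local Open Scope ring_scope.

(* Field trace of F (|F| = 2^n) over Z_2, as an element of F (it lies in {0,1}). *)
Definition trF (F : finFieldType) (n : nat) (x : F) : F := \sum_(k < n) x ^+ (2 ^ k).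

(* The trace as an element of Z_2 = bool (true <-> Tr x = 1). *)
Definition trb (F : finFieldType) (n : nat) (x : F) : bool := trF n x == 1.

Definition sqrtF (F : finFieldType) (x : F) : F := x ^+ (#|F| %/ 2).

(* V is modeled as the column space F^2; linear maps act by left matrix product. *)
Notation V F := 'cV[F]_2.

Definition symplectic_form (F : finFieldType) (S : V F -> V F -> F) : Prop :=
  [/\ (forall (a : F) (u v w : V F), S (a *: u + v) w = a * S u w + S v w),
      (forall (a : F) (u v w : V F), S u (a *: v + w) = a * S u v + S u w),
      (forall v : V F, S v v = 0)
    & exists u v : V F, S u v != 0].

Definition weyl_multiplier (F : finFieldType) (n : nat) (S : V F -> V F -> F)
    (m : V F -> V F -> algC) : Prop :=
  [/\ (forall u v : V F, `|m u v| = 1),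
      (forall u v w : V F, m (u + v) w * m u v = m u (v + w) * m v w),
      (forall d1 d2 : V F,
          (exists d : V F, d != 0 /\ exists a1 a2 : F, d1 = a1 *: d /\ d2 = a2 *: d) ->
          m d1 d2 = 1)
    & (forall u v : V F, (m u v)^* * m v u = (-1) ^+ trb n (S u v))].

Definition Bplus (F : finFieldType) (S : V F -> V F -> F) (e1 e2 : V F) (u v : V F) : F :=
  S u e1 * S v e2.

Definition g0 (F : finFieldType) (n : nat) (S : V F -> V F -> F) (e1 e2 : V F)
    (u v : V F) : 'Z_4 :=
  ((2 * trb n (Bplus S e1 e2 u v))%N)%:R.

Definition gfun (F : finFieldType) (n : nat) (S : V F -> V F -> F) (e1 e2 : V F)
    (h : F -> 'Z_4) (u v : V F) : 'Z_4 :=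
  h (sqrtF (Bplus S e1 e2 (u + v) (u + v))) - h (sqrtF (Bplus S e1 e2 u u))
  - h (sqrtF (Bplus S e1 e2 v v)) + g0 n S e1 e2 u v.

Definition mWeyl (F : finFieldType) (n : nat) (S : V F -> V F -> F) (e1 e2 : V F)
    (h : F -> 'Z_4) (u v : V F) : algC :=
  'i ^+ (nat_of_ord (gfun n S e1 e2 h u v)).

(* Write q u := h (B+(u,u)^(1/2)), so that g(u,v) = q(u+v) - q(u) - q(v) + g0(u,v).
   The q-part is a coboundary and g0 is bilinear, hence g is a 2-cocycle.  Expanding h
   in the self-dual basis shows that h is a quadratic refinement of the trace form,
   h(x+y) = h(x) + h(y) + 2 Tr(xy), which makes g vanish on lines.  Antisymmetrizing g
   kills the coboundary and leaves 2 Tr (B+(u,v) + B+(v,u)) = 2 Tr S(u,v) in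
   characteristic 2.  Finally A scales S(.,e1) by xi^-1 and S(.,e2) by xi, so B+, and
   with it m, is invariant under the torus. *)

From HB Require Import structures.
From mathcomp Require Import all_boot all_order all_algebra all_fingroup all_field.
From mathcomp Require Import ring.
Import GRing.Theory Num.Theory.
Local Open Scope ring_scope.
Set Implicit Arguments. Unset Strict Implicit.

Section TraceOfCharTwoField.

Variables (F : finFieldType) (n : nat).
Hypothesis cardF : #|F| = (2 ^ n)%N.

Lemma char2_card : 2 \in [pchar F].
Proof. exact: card_finPcharP cardF (isT : prime 2). Qed.

Lemma ext_degree_gt0 : (0 < n)%N.
Proof. by have := card_finNzRing_gt1 F; rewrite cardF; case: (n). Qed.

Lemma expr_pow2_card (x : F) : x ^+ (2 ^ n) = x.
Proof. by rewrite -cardF expf_card. Qed.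

Lemma exprD_pow2 k (x y : F) : (x + y) ^+ (2 ^ k) = x ^+ (2 ^ k) + y ^+ (2 ^ k).
Proof. by apply: exprDn_pchar; rewrite (eq_pnat _ (pcharf_eq char2_card)) pnatX pnat_id. Qed.

Lemma trF_add (x y : F) : trF n (x + y) = trF n x + trF n y.
Proof. by rewrite /trF -big_split; apply: eq_bigr => k _; rewrite exprD_pow2. Qed.

Lemma trF0 : trF n (0 : F) = 0.
Proof. by rewrite /trF big1 // => k _; rewrite expr0n expn_eq0. Qed.

Lemma trF_sum I (r : seq I) (P : pred I) (f : I -> F) :
  trF n (\sum_(i <- r | P i) f i) = \sum_(i <- r | P i) trF n (f i).
Proof. exact: (big_morph _ trF_add trF0). Qed.

Lemma trF_natrM (b : bool) (x : F) : trF n (b%:R * x) = b%:R * trF n x.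
Proof. by case: b; rewrite ?mul1r ?mul0r ?trF0. Qed.

Lemma trF_sqr (x : F) : trF n x ^+ 2 = trF n x.
Proof.
have sqrD (y z : F) : (y + z) ^+ 2 = y ^+ 2 + z ^+ 2 := exprD_pow2 1 y z.
rewrite /trF (big_morph _ sqrD (expr0n _ _)).
under eq_bigr => k _ do rewrite -exprM -expnSr.
case: n expr_pow2_card => [|m] xE; first by rewrite !big_ord0.
rewrite big_ord_recr big_ord_recl /= xE expn0 expr1 addrC.
by congr (_ + _); apply: eq_bigr.
Qed.

Lemma trF_trb (x : F) : trF n x = (trb n x)%:R.
Proof.
rewrite /trb; have : trF n x * (trF n x - 1) == 0.
  by rewrite mulrBr mulr1 -expr2 trF_sqr subrr.
by rewrite mulf_eq0 subr_eq0 => /orP[] /eqP ->; rewrite ?eqxx // eq_sym oner_eq0.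
Qed.

Lemma trb_add (x y : F) : trb n (x + y) = trb n x (+) trb n y.
Proof.
rewrite {1}/trb trF_add !trF_trb.
by case: (trb n x); case: (trb n y);
  rewrite ?addr0 ?add0r ?(addrr_pchar2 char2_card) ?eqxx // eq_sym oner_eq0.
Qed.

Lemma trb0 : trb n (0 : F) = false.
Proof. by rewrite /trb trF0 eq_sym oner_eq0. Qed.

Lemma sqrtFE (x : F) : sqrtF x = x ^+ (2 ^ n.-1).
Proof. by rewrite /sqrtF cardF -(prednK ext_degree_gt0) expnS mulKn. Qed.

Lemma sqrtFM (x y : F) : sqrtF (x * y) = sqrtF x * sqrtF y.
Proof. by rewrite !sqrtFE exprMn. Qed.

Lemma sqrtF0 : sqrtF (0 : F) = 0.
Proof. by rewrite sqrtFE expr0n expn_eq0. Qed.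

Lemma sqrtFK (x : F) : sqrtF x ^+ 2 = x.
Proof.
by rewrite sqrtFE -exprM mulnC -expnS prednK ?ext_degree_gt0 // expr_pow2_card.
Qed.

Lemma sqrtF_sqr (x : F) : sqrtF (x ^+ 2) = x.
Proof.
by rewrite sqrtFE -exprM -expnS prednK ?ext_degree_gt0 // expr_pow2_card.
Qed.

End TraceOfCharTwoField.

Definition twice4 (k : nat) : 'Z_4 := (2 * k)%N%:R.

Lemma twice4_addb (a b : bool) : twice4 (a (+) b) = twice4 a + twice4 b.
Proof. by case: a; case: b; apply/eqP. Qed.

Lemma twice4_odd k : twice4 k = twice4 (odd k).
Proof.
have four0 : (2 * 2)%:R = 0 :> 'Z_4 by apply/eqP.
by rewrite /twice4 -{1}(odd_double_half k) -muln2 mulnDr natrD mulnCA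
  [(_ * (2 * 2))%:R]natrM four0 mulr0 addr0.
Qed.

Lemma twice4N (b : bool) : - twice4 b = twice4 b.
Proof. by case: b; apply/eqP. Qed.

Definition ipow (x : 'Z_4) : algC := 'i ^+ x.

Lemma ipowD x y : ipow (x + y) = ipow x * ipow y.
Proof.
have i4 : 'i ^+ 4 = 1 :> algC by rewrite (exprM _ 2 2) sqrCi sqrrN expr1n.
by rewrite /ipow -exprD -(expr_mod _ i4).
Qed.

Lemma ipow_norm x : `|ipow x| = 1.
Proof. by rewrite /ipow normrX normCi expr1n. Qed.

Lemma ipow_conj x : (ipow x)^* = ipow (- x).
Proof.
have xNx : ipow x * ipow (- x) = 1 by rewrite -ipowD subrr.
have cxx : (ipow x)^* * ipow x = 1 by rewrite -normCKC ipow_norm expr1n.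
by rewrite -[LHS]mulr1 -xNx mulrA cxx mul1r.
Qed.

Lemma ipow_twice4 (b : bool) : ipow (twice4 b) = (-1) ^+ b.
Proof. by case: b; rewrite /ipow //= expr1 -sqrCi. Qed.

Lemma GL_expgE m (R : finComUnitRingType) (A : {'GL_m[R]}) k :
  GLval (A ^+ k)%g = GLval A ^+ k.
Proof.
by elim: k => [|k IHk]; rewrite ?expg0 ?GL_1E ?expr0 // expgS GL_ME IHk exprS.
Qed.

Section SymplecticForm.

Variables (F : finFieldType) (S : 'cV[F]_2 -> 'cV[F]_2 -> F).
Implicit Types u v w : 'cV[F]_2.
Hypothesis hS : symplectic_form S.

Lemma symplDl u v w : S (u + v) w = S u w + S v w.
Proof. by case: hS => Sl _ _ _; have := Sl 1 u v w; rewrite scale1r mul1r. Qed.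

Lemma symplDr u v w : S w (u + v) = S w u + S w v.
Proof. by case: hS => _ Sr _ _; have := Sr 1 w u v; rewrite scale1r mul1r. Qed.

Lemma sympl0l w : S 0 w = 0.
Proof. by apply: (addrI (S 0 w)); rewrite -symplDl !addr0. Qed.

Lemma sympl0r w : S w 0 = 0.
Proof. by apply: (addrI (S w 0)); rewrite -symplDr !addr0. Qed.

Lemma symplZl a u w : S (a *: u) w = a * S u w.
Proof. by case: hS => Sl _ _ _; rewrite -[a *: u]addr0 Sl sympl0l addr0. Qed.

Lemma symplZr a u w : S w (a *: u) = a * S w u.
Proof. by case: hS => _ Sr _ _; rewrite -[a *: u]addr0 Sr sympl0r addr0. Qed.

Lemma sympl_alt u : S u u = 0.
Proof. by case: hS. Qed.

Lemma symplN u v : S u v = - S v u.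
Proof.
apply/eqP; rewrite -addr_eq0 eq_sym.
by rewrite -(sympl_alt (u + v)) symplDl !symplDr !sympl_alt add0r addr0.
Qed.

Lemma sympl_coords (e1 e2 : 'cV[F]_2) :
    row_free (col_mx e1^T e2^T) -> S e1 e2 = 1 ->
  forall v, v = S v e2 *: e1 + S e1 v *: e2.
Proof.
move=> full S12 v; have /submxP [D vE] := submx_full v^T full.
pose a1 := lsubmx D 0 0; pose a2 := rsubmx D 0 0.
have -> : v = a1 *: e1 + a2 *: e2.
  apply: trmx_inj; rewrite vE -(hsubmxK D) mul_row_col.
  by rewrite [lsubmx D]mx11_scalar [rsubmx D]mx11_scalar !mul_scalar_mx linearD !linearZ.
rewrite symplDl symplDr !symplZl !symplZr !sympl_alt S12.
by rewrite !mulr0 !mulr1 addr0 add0r.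
Qed.

End SymplecticForm.

Section SelfDualBasis.

Variables (n : nat) (F : finFieldType).
Hypothesis cardF : #|F| = (2 ^ n)%N.
Variable omega : 'I_n -> F.
Hypothesis homega : forall i j : 'I_n, trF n (omega i * omega j) = (i == j)%:R.

Definition dual_comb (z : {ffun 'I_n -> bool}) : F := \sum_(i < n) (z i)%:R * omega i.

Lemma trF_dual_comb_mul z j : trF n (dual_comb z * omega j) = (z j)%:R.
Proof.
rewrite mulr_suml (trF_sum cardF) (bigD1 j) //= -mulrA trF_natrM homega eqxx mulr1.
by rewrite big1 ?addr0 // => i /negbTE ji; rewrite -mulrA trF_natrM homega ji mulr0.
Qed.

Lemma dual_comb_inj : injective dual_comb.
Proof.
move=> z w zw; apply/ffunP => j; have := trF_dual_comb_mul z j.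
rewrite zw trF_dual_comb_mul.
by case: (z j); case: (w j) => // /eqP; rewrite ?oner_eq0 // eq_sym oner_eq0.
Qed.

Lemma dual_comb_onto (x : F) : exists z, x = dual_comb z.
Proof.
have cardle : (#|F| <= #|{ffun 'I_n -> bool}|)%N by rewrite card_ffun card_bool card_ord cardF.
by have /codomP [z ->] := inj_card_onto dual_comb_inj cardle x; exists z.
Qed.

Lemma dual_combD z w : dual_comb z + dual_comb w = dual_comb [ffun i => z i (+) w i].
Proof.
rewrite /dual_comb -big_split; apply: eq_bigr => i _; rewrite ffunE.
case: (z i); case: (w i); rewrite /= ?mul1r ?mul0r ?add0r ?addr0 //.
by rewrite (addrr_pchar2 (char2_card cardF)).
Qed.

Lemma trb_dual_comb_mul z w :
  trb n (dual_comb z * dual_comb w) = odd (\sum_(i < n) z i * w i).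
Proof.
have trE : trF n (dual_comb z * dual_comb w) = (\sum_(i < n) z i * w i)%:R.
  rewrite natr_sum {2}/dual_comb mulr_sumr (trF_sum cardF); apply: eq_bigr => j _.
  by rewrite mulrCA trF_natrM trF_dual_comb_mul natrM mulrC.
rewrite /trb trE -[X in X%:R](odd_double_half) natrD -muln2 natrM.
rewrite (pcharf0 (char2_card cardF)) mulr0 addr0.
by case: odd; rewrite ?eqxx // eq_sym oner_eq0.
Qed.

Variables (r : 'I_n -> 'Z_4) (h : F -> 'Z_4).
Hypothesis hr : forall i, r i = 1 \/ r i = -1.
Hypothesis hh : forall z : 'I_n -> bool,
  h (\sum_(i < n) (z i)%:R * omega i) = \sum_(i < n) r i * (z i)%:R.

(* Each summand of h is r_i z_i^2 with r_i = +-1, whose polarization is 2 z_i w_i. *)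
Lemma h_quadratic (x y : F) : h (x + y) = h x + h y + twice4 (trb n (x * y)).
Proof.
have [z ->] := dual_comb_onto x; have [w ->] := dual_comb_onto y.
rewrite dual_combD trb_dual_comb_mul -twice4_odd !hh /twice4 natrM natr_sum mulr_sumr.
rewrite -!big_split; apply: eq_bigr => i _; rewrite ffunE.
by case: (hr i) => ->; case: (z i); case: (w i); apply/eqP.
Qed.

End SelfDualBasis.

Section WeylMultiplier.

Variables (n : nat) (F : finFieldType).
Hypothesis cardF : #|F| = (2 ^ n)%N.
Variables (S : 'cV[F]_2 -> 'cV[F]_2 -> F) (e1 e2 : 'cV[F]_2).
Hypotheses (hS : symplectic_form S) (basis12 : row_free (col_mx e1^T e2^T)).
Hypothesis S12 : S e1 e2 = 1.
Variable h : F -> 'Z_4.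
Hypothesis h_quad : forall x y : F, h (x + y) = h x + h y + twice4 (trb n (x * y)).

Implicit Types u v w : 'cV[F]_2.

Local Notation B := (Bplus S e1 e2).
Local Notation g := (gfun n S e1 e2 h).
Local Notation m := (mWeyl n S e1 e2 h).

Lemma mWeylE u v : m u v = ipow (g u v).
Proof. by []. Qed.

Lemma BplusDl u v w : B (u + v) w = B u w + B v w.
Proof. by rewrite /Bplus (symplDl hS) mulrDl. Qed.

Lemma BplusDr u v w : B u (v + w) = B u v + B u w.
Proof. by rewrite /Bplus (symplDl hS) mulrDr. Qed.

Lemma BplusZ a b u v : B (a *: u) (b *: v) = a * b * B u v.
Proof. by rewrite /Bplus !(symplZl hS) mulrACA. Qed.

Lemma symplE u v : S u v = B u v + B v u.
Proof.
rewrite {1}[v](sympl_coords hS basis12 S12) (symplDr hS) !(symplZr hS).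
by rewrite (symplN hS e1) (oppr_pchar2 (char2_card cardF)) /Bplus [S v e2 * _]mulrC.
Qed.

Lemma sympl21 : S e2 e1 = 1.
Proof. by rewrite (symplN hS) S12 (oppr_pchar2 (char2_card cardF)). Qed.

Lemma g0E u v : g0 n S e1 e2 u v = twice4 (trb n (B u v)).
Proof. by []. Qed.

Lemma g0Dl u v w : g0 n S e1 e2 (u + v) w = g0 n S e1 e2 u w + g0 n S e1 e2 v w.
Proof. by rewrite !g0E BplusDl (trb_add cardF) twice4_addb. Qed.

Lemma g0Dr u v w : g0 n S e1 e2 u (v + w) = g0 n S e1 e2 u v + g0 n S e1 e2 u w.
Proof. by rewrite !g0E BplusDr (trb_add cardF) twice4_addb. Qed.

Lemma h0 : h 0 = 0.
Proof.
have := h_quad 0 0; rewrite addr0 mulr0 trb0 [twice4 false]/twice4 addr0 => h00.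
by apply: (addrI (h 0)); rewrite addr0 -h00.
Qed.

Lemma mWeyl_norm u v : `|m u v| = 1.
Proof. by rewrite mWeylE ipow_norm. Qed.

(* g is the coboundary of u |-> h (B(u,u)^(1/2)) plus the bilinear g0. *)
Lemma mWeyl_cocycle u v w : m (u + v) w * m u v = m u (v + w) * m v w.
Proof.
by rewrite !mWeylE -!ipowD /gfun g0Dl g0Dr [u + (v + w)]addrA; congr ipow; ring.
Qed.

Lemma mWeyl_line d a1 a2 : m (a1 *: d) (a2 *: d) = 1.
Proof.
rewrite mWeylE /gfun g0E -scalerDl !BplusZ.
set c := B d d; have sqrtF_scale a : sqrtF (a * a * c) = a * sqrtF c.
  by rewrite (sqrtFM cardF) -expr2 (sqrtF_sqr cardF).
rewrite !sqrtF_scale mulrDl h_quad mulrACA -expr2 (sqrtFK cardF).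
have -> : forall x y t : 'Z_4, x + y + t - x - y + t = t + t by move=> *; ring.
by rewrite -{1}twice4N addNr.
Qed.

Lemma mWeyl_comm u v : (m u v)^* * m v u = (-1) ^+ trb n (S u v).
Proof.
rewrite !mWeylE ipow_conj -ipowD symplE (trb_add cardF) -ipow_twice4 twice4_addb.
rewrite /gfun addrC !g0E -[in RHS](twice4N (trb n (B u v))) [v + u]addrC; congr ipow; ring.
Qed.

Lemma weyl_multiplier_mWeyl : weyl_multiplier n S m.
Proof.
split; [exact: mWeyl_norm | exact: mWeyl_cocycle | | exact: mWeyl_comm].
by move=> _ _ [d [_ [a1 [a2 [-> ->]]]]]; apply: mWeyl_line.
Qed.

Lemma mWeyl_e1e2 a1 a2 : m (a1 *: e1) (a2 *: e2) = ipow (h (sqrtF (a1 * a2))).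
Proof.
rewrite mWeylE /gfun g0E /Bplus !(symplDl hS) !(symplZl hS) !(sympl_alt hS).
rewrite S12 sympl21 !mulr0 !mul0r !add0r !addr0 mulr1 trb0 (sqrtF0 cardF) h0.
by rewrite mulrC !subr0 addr0 mulr1.
Qed.

Lemma mWeyl_invariant (M : 'M[F]_2) :
    (forall u v, B (M *m u) (M *m v) = B u v) ->
  forall u v, m (M *m u) (M *m v) = m u v.
Proof. by move=> BM u v; rewrite !mWeylE /gfun g0E -mulmxDr !BM. Qed.

Section SplitTorus.

Variables (A : 'M[F]_2) (xi : F).
Hypotheses (xi_neq0 : xi != 0) (Ae1 : A *m e1 = xi *: e1) (Ae2 : A *m e2 = xi^-1 *: e2).

Lemma sympl_mulmx_e1 w : S (A *m w) e1 = xi^-1 * S w e1.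
Proof.
rewrite [w in RHS](sympl_coords hS basis12 S12) [w in LHS](sympl_coords hS basis12 S12).
rewrite mulmxDr -!scalemxAr Ae1 Ae2 !scalerA !(symplDl hS) !(symplZl hS) !(sympl_alt hS).
by rewrite !mulr0 !add0r; ring.
Qed.

Lemma sympl_mulmx_e2 w : S (A *m w) e2 = xi * S w e2.
Proof.
rewrite [w in RHS](sympl_coords hS basis12 S12) [w in LHS](sympl_coords hS basis12 S12).
rewrite mulmxDr -!scalemxAr Ae1 Ae2 !scalerA !(symplDl hS) !(symplZl hS) !(sympl_alt hS).
by rewrite !mulr0 !addr0; ring.
Qed.

Lemma Bplus_mulmx u v : B (A *m u) (A *m v) = B u v.
Proof.
by rewrite /Bplus sympl_mulmx_e1 sympl_mulmx_e2 mulrACA mulVf // mul1r.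
Qed.

Lemma Bplus_mulmx_exp k u v : B (A ^+ k *m u) (A ^+ k *m v) = B u v.
Proof.
elim: k u v => [|k IHk] u v; first by rewrite !mul1mx.
by rewrite exprS -mulmxE -!mulmxA Bplus_mulmx IHk.
Qed.

End SplitTorus.

End WeylMultiplier.

Unset Implicit Arguments.

Theorem mainTheorem7 (n : nat) (F : finFieldType) (hF : #|F| = (2 ^ n)%N)
    (omega : 'I_n -> F)
    (homega : forall i j : 'I_n, trF n (omega i * omega j) = (i == j)%:R)
    (r : 'I_n -> 'Z_4) (hr : forall i, r i = 1 \/ r i = -1)
    (h : F -> 'Z_4)
    (hh : forall z : 'I_n -> bool,
        h (\sum_(i < n) (z i)%:R * omega i) = \sum_(i < n) r i * (z i)%:R)
    (S : 'cV[F]_2 -> 'cV[F]_2 -> F) (hS : symplectic_form S)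
    (A : {'GL_2[F]}) (hdet : \det (GLval A) = 1) (hord : #[A]%g = #|F|.-1)
    (xi : F) (hxi : xi != xi^-1)
    (e1 e2 : 'cV[F]_2) (hbasis : row_free (col_mx e1^T e2^T)) (hS12 : S e1 e2 = 1)
    (hA1 : GLval A *m e1 = xi *: e1) (hA2 : GLval A *m e2 = xi^-1 *: e2) :
  let m := mWeyl n S e1 e2 h in
  [/\ weyl_multiplier n S m,
      (forall B : {'GL_2[F]}, B \in <[A]>%g ->
          forall u v : 'cV[F]_2, m (GLval B *m u) (GLval B *m v) = m u v)
    & (forall a1 a2 : F, m (a1 *: e1) (a2 *: e2) = 'i ^+ (nat_of_ord (h (sqrtF (a1 * a2)))))].
Proof.
move=> m; have h_quad := h_quadratic hF homega hr hh.
have xi_neq0 : xi != 0 by apply: contraNneq hxi => ->; rewrite invr0.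
split.
- exact: (weyl_multiplier_mWeyl hF hS hbasis hS12 h_quad).
- move=> _ /cycleP [k ->]; rewrite GL_expgE; apply: mWeyl_invariant.
  exact: (Bplus_mulmx_exp hS hbasis hS12 xi_neq0 hA1 hA2).
- exact: (mWeyl_e1e2 hF hS hS12 h_quad).
Qed.
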